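(* Let $q$ be a prime power, let $\mathcal{F}=(\mathcal{F}_1,\ldots,\mathcal{F}_r)$ be a flag on $\mathbb{F}_{q^n}$ whose best friend is the subfield $\mathbb{F}_{q^m}$, and let $\beta\in\mathbb{F}_{q^n}^*$. For $1\le i\le r$ let $\mathbb{F}_{q^{m_i}}$ denote the best friend of $\mathcal{F}_i$. Then $\mathrm{Orb}_\beta(\mathcal{F})$ is disjoint if and only if $$\langle\beta\rangle\cap\mathbb{F}_{q^m}^*=\langle\beta\rangle\cap\mathbb{F}_{q^{m_1}}^*=\cdots=\langle\beta\rangle\cap\mathbb{F}_{q^{m_r}}^*.$$ In particular, the cyclic orbit flag code $\mathrm{Orb}(\mathcal{F})$ is disjoint if and only if all the subspaces $\mathcal{F}_1,\ldots,\mathcal{F}_r$ have $\mathbb{F}_{q^m}$ as their best friend.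
   Context: A flag on $\mathbb{F}_{q^n}$ is a sequence $(\mathcal{F}_1,\ldots,\mathcal{F}_r)$ of $\mathbb{F}_q$-subspaces with $\{0\}\subsetneq\mathcal{F}_1\subsetneq\cdots\subsetneq\mathcal{F}_r\subsetneq\mathbb{F}_{q^n}$. For $\gamma\in\mathbb{F}_{q^n}^*$, $\mathcal{U}\gamma=\{u\gamma:u\in\mathcal{U}\}$, $\mathcal{F}\gamma=(\mathcal{F}_1\gamma,\ldots,\mathcal{F}_r\gamma)$; $\mathrm{Orb}_\beta(\mathcal{F})=\{\mathcal{F}\beta^j:0\le j\le|\beta|-1\}$ with $|\beta|$ the multiplicative order, and $\mathrm{Orb}(\mathcal{F})=\{\mathcal{F}\gamma:\gamma\in\mathbb{F}_{q^n}^*\}$. A subfield $\mathbb{F}_{q^k}$ is a friend of a subspace $\mathcal{U}$ if $\mathcal{U}$ is an $\mathbb{F}_{q^k}$-vector space, and a friend of $\mathcal{F}$ if it is a friend of every $\mathcal{F}_i$; the best friend is the largest friend. For a set $\mathcal{C}$ of flags, its $i$-th projected code $\mathcal{C}_i$ is the set of $i$-th subspaces of its flags; $\mathcal{C}$ is disjoint if $|\mathcal{C}_1|=\cdots=|\mathcal{C}_r|=|\mathcal{C}|$. *)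

From HB Require Import structures.
From mathcomp Require Import all_boot all_order all_algebra all_fingroup all_field.
Set Implicit Arguments. Unset Strict Implicit. Unset Printing Implicit Defensive.
Import GRing.Theory.
Local Open Scope ring_scope.

(* Setting: F = F_q is a finite field, L = F_{q^n} is a finite field extension
   of F (fieldExtType F).  F_q-subspaces of L are {vspace L}; the subfields
   F_{q^k} of L (all of which contain F_q) are {subfield L}. *)

Section Flags.
Variables (F : finFieldType) (L : fieldExtType F).

Definition vmul (U : {vspace L}) (g : L) : {vspace L} := (U * <[g]>)%VS.

Definition is_flag (r : nat) (Fl : {ffun 'I_r -> {vspace L}}) : Prop :=
  (forall i : 'I_r, Fl i != 0%VS) /\
  (forall i : 'I_r, Fl i != fullv) /\
  (forall i j : 'I_r, (i < j)%N -> (Fl i <= Fl j)%VS /\ Fl i != Fl j).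

Definition flag_mul (r : nat) (Fl : {ffun 'I_r -> {vspace L}}) (g : L)
  : {ffun 'I_r -> {vspace L}} := [ffun i => vmul (Fl i) g].

(* K is a friend of U : U is a K-vector space, i.e. K U <= U. *)
Definition friend (K : {subfield L}) (U : {vspace L}) : bool := (K * U <= U)%VS.

Definition best_friend (K : {subfield L}) (U : {vspace L}) : Prop :=
  friend K U /\ forall K' : {subfield L}, friend K' U -> (K' <= K)%VS.

Definition flag_friend r (K : {subfield L}) (Fl : {ffun 'I_r -> {vspace L}}) :=
  forall i : 'I_r, friend K (Fl i).

Definition flag_best_friend r (K : {subfield L}) (Fl : {ffun 'I_r -> {vspace L}})
  : Prop :=
  flag_friend K Fl /\ forall K' : {subfield L}, flag_friend K' Fl -> (K' <= K)%VS.

(* Multiplicative order |beta| of a nonzero beta: the least k >= 1 with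
   beta^k = 1 (searched in [1, #|L|], which always contains it). *)
Definition mult_order (b : L) : nat :=
  head 0%N [seq k <- iota 1 #|finvect_type L| | b ^+ k == 1].

Definition orb_beta r (Fl : {ffun 'I_r -> {vspace L}}) (b : L)
  : seq {ffun 'I_r -> {vspace L}} :=
  undup [seq flag_mul Fl (b ^+ j) | j <- iota 0 (mult_order b)].

Definition orb r (Fl : {ffun 'I_r -> {vspace L}})
  : seq {ffun 'I_r -> {vspace L}} :=
  undup [seq flag_mul Fl (g : L) | g <- enum [pred x : finvect_type L | x != 0]].

Definition disjoint_code r (C : seq {ffun 'I_r -> {vspace L}}) : Prop :=
  forall i : 'I_r, size (undup (map (fun c : {ffun 'I_r -> {vspace L}} => c i) C)) = size C.

Definition cyc_cap_eq (b : L) (K K' : {subfield L}) : Prop :=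
  forall k : nat, (b ^+ k \in K) = (b ^+ k \in K').

End Flags.

From HB Require Import structures.
From mathcomp Require Import all_boot all_order all_algebra all_fingroup all_field.
Import GRing.Theory.
Local Open Scope ring_scope.
Set Implicit Arguments. Unset Strict Implicit.

(* Both codes are orbits [{F g : g in G}] of a group [G] of nonzero elements
   ([G = <beta>] or [G = F_{q^n}^*]).  Since [F_i x = F_i y] iff [x / y]
   stabilizes [F_i], and the stabilizer of a subspace (resp. flag) is its
   best friend (the subfield generated by a stabilizing [g] is a friend),
   the projection [F g |-> F_i g] is injective on the orbit exactly when
   [G] meets the best friends of [F] and of [F_i] in the same elements. *)

Section UndupMap.
Variables (T U : eqType).

Lemma map_uniq_inj_in (g : T -> U) (C : seq T) :
  uniq (map g C) -> {in C &, injective g}.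
Proof.
elim: C => //= x C IHC /andP[gxC uC] y z.
rewrite !inE => /predU1P[-> | yC] /predU1P[-> | zC] // gyz.
- by rewrite gyz map_f in gxC.
- by rewrite -gyz map_f in gxC.
- exact: IHC.
Qed.

Lemma size_undup_mapP (g : T -> U) (C : seq T) :
  uniq C -> size (undup (map g C)) = size C <-> {in C &, injective g}.
Proof.
move=> uC; split=> [sizeE | g_inj]; last by rewrite undup_id ?size_map ?map_inj_in_uniq.
apply: map_uniq_inj_in; apply/negPn/negP.
by rewrite -ltn_size_undup sizeE size_map ltnn.
Qed.

Lemma size_undup_map_compP (V : eqType) (f : V -> T) (g : T -> U) (s : seq V) :
  size (undup (map g (undup (map f s)))) = size (undup (map f s)) <->
  {in s &, forall x y, g (f x) = g (f y) -> f x = f y}.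
Proof.
apply: iff_trans (size_undup_mapP _ (undup_uniq _)) _.
split=> [g_inj x y xs ys | gf_inj u v]; first by apply: g_inj; rewrite mem_undup map_f.
by rewrite !mem_undup => /mapP[x xs ->] /mapP[y ys ->]; apply: gf_inj.
Qed.

End UndupMap.

Section Stabilizers.
Variables (F : finFieldType) (L : fieldExtType F).
Implicit Types (U : {vspace L}) (K : {subfield L}) (x y g : L).

Lemma mem_vmul U g u : u \in U -> u * g \in vmul U g.
Proof. by move=> uU; apply: memv_mul uU (memv_line g). Qed.

Lemma vmulA U x y : vmul (vmul U x) y = vmul U (x * y).
Proof. by rewrite /vmul -prodvA prodv_line. Qed.

Lemma vmul1 U : vmul U 1 = U.
Proof. by rewrite /vmul prodv1. Qed.

Lemma vmul_eq_divP U x y :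
  y != 0 -> vmul U x = vmul U y <-> vmul U (x / y) = U.
Proof.
move=> y0; split=> [Uxy | Uxy]; first by rewrite -vmulA Uxy vmulA mulfV ?vmul1.
by rewrite -{1}(divfK y0 x) -vmulA Uxy.
Qed.

Lemma friend_vmul_id K U g : friend K U -> g \in K -> g != 0 -> vmul U g = U.
Proof.
move=> KU gK g0; apply/eqP; rewrite eqEdim dim_cosetv // leqnn andbT.
by rewrite /vmul prodvC; apply: subv_trans KU; rewrite prodvSl // -memvE.
Qed.

Lemma vmul_id_friend_adjoin U g : vmul U g = U -> friend <<1; g>>%AS U.
Proof.
move=> Ug; apply/prodvP => _ u /Fadjoin1_polyP[p ->] uU.
have gU w : w \in U -> g * w \in U by rewrite mulrC -{2}Ug; apply: mem_vmul.
have gXU i w : w \in U -> g ^+ i * w \in U.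
  by elim: i w => [|i IHi] w wU; rewrite ?mul1r // exprSr -mulrA IHi ?gU.
rewrite horner_coef mulr_suml; apply: memv_suml => i _.
by rewrite coef_map /= -mulrA mulr_algl memvZ ?gXU.
Qed.

Lemma best_friend_stabP K U g :
  best_friend K U -> g != 0 -> vmul U g = U <-> g \in K.
Proof.
case=> KU maxK g0; split=> [/vmul_id_friend_adjoin/maxK | ]; first by rewrite sub_adjoin1v.
by move=> gK; apply: friend_vmul_id gK g0.
Qed.

Variable r : nat.
Implicit Type Fl : {ffun 'I_r -> {vspace L}}.

Lemma flag_mulA Fl x y : flag_mul (flag_mul Fl x) y = flag_mul Fl (x * y).
Proof. by apply/ffunP => i; rewrite !ffunE vmulA. Qed.

Lemma flag_mul1 Fl : flag_mul Fl 1 = Fl.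
Proof. by apply/ffunP => i; rewrite ffunE vmul1. Qed.

Lemma flag_mul_eq_divP Fl x y :
  y != 0 -> flag_mul Fl x = flag_mul Fl y <-> flag_mul Fl (x / y) = Fl.
Proof.
move=> y0; split=> [Fxy | Fxy]; first by rewrite -flag_mulA Fxy flag_mulA mulfV ?flag_mul1.
by rewrite -{1}(divfK y0 x) -flag_mulA Fxy.
Qed.

Lemma flag_best_friend_stabP K Fl g :
  flag_best_friend K Fl -> g != 0 -> flag_mul Fl g = Fl <-> g \in K.
Proof.
case=> KFl maxK g0; split=> [Fg | gK].
  rewrite -sub_adjoin1v; apply: maxK => i; apply: vmul_id_friend_adjoin.
  by rewrite -[in RHS]Fg ffunE.
by apply/ffunP => i; rewrite ffunE (friend_vmul_id (KFl i)).
Qed.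

End Stabilizers.

Section OrbitCodes.
Variables (F : finFieldType) (L : fieldExtType F) (r : nat).
Variables (Fl : {ffun 'I_r -> {vspace L}}) (K : {subfield L}) (Ki : 'I_r -> {subfield L}).
Hypothesis K_best : flag_best_friend K Fl.
Hypothesis Ki_best : forall i, best_friend (Ki i) (Fl i).

Lemma flag_best_friend_sub i : (K <= Ki i)%VS.
Proof. exact: (Ki_best i).2 _ (K_best.1 i). Qed.

Lemma best_friend_entryP i : best_friend K (Fl i) <-> K =i Ki i.
Proof.
split=> [[_ maxK] x | KKi].
  by apply/idP/idP => [/(subvP (flag_best_friend_sub i)) |
                       /(subvP (maxK _ (Ki_best i).1))].
split=> [|K' /(Ki_best i).2 KKi']; first exact: K_best.1.
by apply/subvP => x /(subvP KKi'); rewrite KKi.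
Qed.

Lemma disjoint_orbit_codeP (s : seq L) :
  0 \notin s -> 1 \in s -> {in s &, forall x y, x / y \in s} ->
  disjoint_code (undup (map (flag_mul Fl) s)) <->
  forall i, {in s, forall g, (g \in K) = (g \in Ki i)}.
Proof.
move=> s0 s1 s_div; have s_neq0 := memPn s0.
split=> [disj i g gs | capE i].
  apply/idP/idP => [/(subvP (flag_best_friend_sub i)) // | gKi].
  have g0 := s_neq0 g gs; apply/(flag_best_friend_stabP K_best g0).
  have /size_undup_map_compP Fi_inj := disj i.
  rewrite -[RHS]flag_mul1; apply: Fi_inj gs s1 _.
  by rewrite !ffunE vmul1; apply/(best_friend_stabP (Ki_best i) g0).
apply/size_undup_map_compP => x y xs ys.
have y0 := s_neq0 y ys; have xy0 := s_neq0 _ (s_div x y xs ys).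
rewrite !ffunE => /(vmul_eq_divP _ _ y0) /(best_friend_stabP (Ki_best i) xy0).
rewrite -capE ?s_div // => /(flag_best_friend_stabP K_best xy0).
by move=> Fxy; apply/(flag_mul_eq_divP _ _ y0).
Qed.

End OrbitCodes.

Section Powers.
Variables (F : finFieldType) (L : fieldExtType F) (b : L).
Hypothesis b0 : b != 0.

Lemma mult_orderP : (0 < mult_order b)%N /\ b ^+ mult_order b = 1.
Proof.
set n := #|finvect_type L|.
have n_gt1 : (1 < n)%N by apply: card_finNzRing_gt1.
have n_gt0 := ltnW n_gt1.
have bn1 : b ^+ n.-1 = 1.
  apply: (mulIf b0); rewrite mul1r -exprSr (prednK n_gt0).
  exact: (@expf_card (finvect_type L) b).
rewrite /mult_order -/n.
set s := [seq k <- iota 1 n | b ^+ k == 1].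
have : n.-1 \in s.
  by rewrite mem_filter bn1 eqxx mem_iota -ltnS (prednK n_gt0) n_gt1 add1n leqnSn.
case Es: s => [|h t] // _.
have : h \in s by rewrite Es mem_head.
by rewrite mem_filter mem_iota => /andP[/eqP -> /andP[]].
Qed.

Definition powers : seq L := [seq b ^+ j | j <- iota 0 (mult_order b)].

Lemma expr_mod_mult_order k : b ^+ k = b ^+ (k %% mult_order b).
Proof.
have [_ bN1] := mult_orderP.
by rewrite {1}(divn_eq k (mult_order b)) exprD mulnC exprM bN1 expr1n mul1r.
Qed.

Lemma mem_powers k : b ^+ k \in powers.
Proof.
have [N_gt0 _] := mult_orderP.
by rewrite expr_mod_mult_order map_f // mem_iota ltn_pmod.
Qed.

Lemma mem1_powers : 1 \in powers.
Proof. by rewrite -(expr0 b) mem_powers. Qed.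

Lemma powers_neq0 : 0 \notin powers.
Proof. by apply/mapP => -[j _ /eqP]; rewrite eq_sym expf_eq0 (negbTE b0) andbF. Qed.

Lemma powers_div : {in powers &, forall x y, x / y \in powers}.
Proof.
have [_ bN1] := mult_orderP.
move=> x y /mapP[j _ ->] /mapP[k]; rewrite mem_iota => /andP[_ k_lt] ->.
have bk0 : b ^+ k != 0 by rewrite expf_neq0.
suff -> : b ^+ j / b ^+ k = b ^+ (j + (mult_order b - k)) by apply: mem_powers.
apply: (mulIf bk0); rewrite divfK // -exprD -addnA subnK ?(ltnW k_lt) //.
by rewrite exprD bN1 mulr1.
Qed.

Lemma orb_beta_powers r (Fl : {ffun 'I_r -> {vspace L}}) :
  orb_beta Fl b = undup (map (flag_mul Fl) powers).
Proof. by rewrite /orb_beta /powers -map_comp. Qed.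

Lemma cyc_cap_eq_powersP (K K' : {subfield L}) :
  cyc_cap_eq b K K' <-> {in powers, forall g, (g \in K) = (g \in K')}.
Proof.
split=> [capE x /mapP[j _ ->] | capE k]; first exact: capE.
by apply: capE; apply: mem_powers.
Qed.

End Powers.

Section NonzeroElements.
Variables (F : finFieldType) (L : fieldExtType F).

Definition nonzero_elements : seq L := enum [pred x : finvect_type L | x != 0].

Lemma mem_nonzero_elements x : (x \in nonzero_elements) = (x != 0).
Proof. exact: (@mem_enum (finvect_type L) [pred y : finvect_type L | y != 0] x). Qed.

Lemma nonzero_elements_neq0 : 0 \notin nonzero_elements.
Proof. by rewrite mem_nonzero_elements eqxx. Qed.

Lemma mem1_nonzero_elements : 1 \in nonzero_elements.
Proof. by rewrite mem_nonzero_elements oner_neq0. Qed.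

Lemma nonzero_elements_div :
  {in nonzero_elements &, forall x y, x / y \in nonzero_elements}.
Proof.
by move=> x y; rewrite !mem_nonzero_elements => x0 y0; rewrite mulf_neq0 ?invr_eq0.
Qed.

Lemma orb_nonzero_elements r (Fl : {ffun 'I_r -> {vspace L}}) :
  orb Fl = undup (map (flag_mul Fl) nonzero_elements).
Proof. by []. Qed.

Lemma nonzero_elements_capP (K K' : {subfield L}) :
  {in nonzero_elements, forall g, (g \in K) = (g \in K')} <-> (K =i K').
Proof.
split=> [capE x | KK' x _]; last exact: KK'.
by have [-> | x0] := eqVneq x 0; rewrite ?mem0v // capE ?mem_nonzero_elements.
Qed.

End NonzeroElements.

Theorem proposition4p19 (F : finFieldType) (L : fieldExtType F) (r : nat)
    (Fl : {ffun 'I_r -> {vspace L}}) (K : {subfield L})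
    (Ki : 'I_r -> {subfield L}) (b : L) :
  is_flag Fl ->
  flag_best_friend K Fl ->
  (forall i : 'I_r, best_friend (Ki i) (Fl i)) ->
  b != 0 ->
  (disjoint_code (orb_beta Fl b) <->
     (forall i : 'I_r, cyc_cap_eq b K (Ki i))) /\
  (disjoint_code (orb Fl) <-> (forall i : 'I_r, best_friend K (Fl i))).
Proof.
move=> _ K_best Ki_best b0; split.
  rewrite orb_beta_powers.
  apply: iff_trans (disjoint_orbit_codeP K_best Ki_best (powers_neq0 b0)
    (mem1_powers b0) (powers_div b0)) _.
  by split=> capE i; apply/(cyc_cap_eq_powersP b0); apply: capE.
rewrite orb_nonzero_elements.
apply: iff_trans (disjoint_orbit_codeP K_best Ki_best (@nonzero_elements_neq0 _ L)
  (@mem1_nonzero_elements _ L) (@nonzero_elements_div _ L)) _.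
have best_friendP := best_friend_entryP K_best Ki_best.
split=> capE i; first by apply/best_friendP/nonzero_elements_capP.
by apply/nonzero_elements_capP; apply/best_friendP.
Qed.
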